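(* For every finite $\sigma$-structure $\mathscr{A}$, $\mathsf{td}(\mathscr{A})=\kappa^{\mathbb{E}}(\mathscr{A})$.
   Context: $\mathbb{E}_k\mathscr{A}$ ($k\ge1$): universe $A^{\le k}$ (non-empty sequences of length $\le k$); $R(s_1,\dots,s_n)$ iff the $s_i$ are pairwise prefix-comparable and $R^{\mathscr{A}}$ holds of their last elements; $\varepsilon[a_1,\dots,a_j]=a_j$; $\delta[a_1,\dots,a_j]=[[a_1],[a_1,a_2],\dots,[a_1,\dots,a_j]]$; $\mathbb{E}_k h[a_1,\dots,a_j]=[h(a_1),\dots,h(a_j)]$. An $\mathbb{E}_k$-coalgebra on $\mathscr{A}$ is a homomorphism $\alpha:\mathscr{A}\to\mathbb{E}_k\mathscr{A}$ with $\delta\circ\alpha=\mathbb{E}_k\alpha\circ\alpha$ and $\varepsilon\circ\alpha=\mathrm{id}$. $\kappa^{\mathbb{E}}(\mathscr{A})$ is the least $k$ such that an $\mathbb{E}_k$-coalgebra on $\mathscr{A}$ exists. Gaifman graph $\mathcal{G}(\mathscr{A})=(A,\frown)$: $a\frown a'$ iff $a\ne a'$ and both occur in a common tuple of some $R^{\mathscr{A}}$. Forest: poset where predecessors of each element form a finite chain; height = max chain size. Forest cover of $(V,\frown)$: forest order on $V$ in which adjacent vertices are comparable. $\mathsf{td}(\mathscr{A})$ is the minimum height of a forest cover of $\mathcal{G}(\mathscr{A})$. *)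

From Stdlib Require Import ClassicalEpsilon.
From mathcomp Require Import all_boot.
Set Implicit Arguments. Unset Strict Implicit. Unset Printing Implicit Defensive.

(* A relational signature: symbols [S] with arities [ar].  A finite
   sigma-structure is a finite type [A] together with interpretations
   [RA R : (ar R).-tuple A -> Prop]. *)

Definition min_nat (P : nat -> Prop) : nat :=
  epsilon (inhabits 0) (fun n => P n /\ forall m, P m -> n <= m).

Section Defs.
Variables (S : Type) (ar : S -> nat) (A : finType).
Variable RA : forall R : S, (ar R).-tuple A -> Prop.
Arguments RA : clear implicits.

Definition gaifman_adj (a b : A) : Prop :=
  a != b /\ exists (R : S) (t : (ar R).-tuple A), RA R t /\ a \in t /\ b \in t.

Definition is_chain (le : A -> A -> Prop) (C : {set A}) : Prop :=
  forall x y, x \in C -> y \in C -> le x y \/ le y x.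

(* partial order in which the predecessors of every element form a chain
   (finiteness of that chain is automatic since A is finite) *)
Definition is_forest (le : A -> A -> Prop) : Prop :=
  (forall x, le x x) /\
  (forall x y, le x y -> le y x -> x = y) /\
  (forall x y z, le x y -> le y z -> le x z) /\
  (forall x y z, le y x -> le z x -> le y z \/ le z y).

Definition forest_height (le : A -> A -> Prop) (h : nat) : Prop :=
  (exists C : {set A}, is_chain le C /\ #|C| = h) /\
  (forall C : {set A}, is_chain le C -> #|C| <= h).

Definition forest_cover (le : A -> A -> Prop) : Prop :=
  is_forest le /\ forall a b, gaifman_adj a b -> le a b \/ le b a.

Definition td : nat :=
  min_nat (fun h => exists le, forest_cover le /\ forest_height le h).

(* the universe of E_k A: non-empty sequences of length <= k *)
Definition in_Ek (k : nat) (s : seq A) : bool := 0 < size s <= k.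

Definition prefix_comparable (s t : seq A) : bool := prefix s t || prefix t s.

(* last element (counit epsilon), as an option to avoid default values *)
Definition lastopt (s : seq A) : option A := ohead (rev s).

Definition Ek_rel (R : S) (u : (ar R).-tuple (seq A)) : Prop :=
  (forall i j, prefix_comparable (tnth u i) (tnth u j)) /\
  exists t : (ar R).-tuple A, [seq lastopt s | s <- u] = [seq Some a | a <- t]
                              /\ RA R t.

Definition Ek_delta (s : seq A) : seq (seq A) :=
  [seq take i.+1 s | i <- iota 0 (size s)].

Definition Ek_coalgebra (k : nat) (alpha : A -> seq A) : Prop :=
  (forall a, in_Ek k (alpha a)) /\
  (forall (R : S) (t : (ar R).-tuple A), RA R t -> Ek_rel (map_tuple alpha t)) /\
  (forall a, Ek_delta (alpha a) = map alpha (alpha a)) /\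
  (forall a, lastopt (alpha a) = Some a).

Definition kappaE : nat :=
  min_nat (fun k => 1 <= k /\ exists alpha, Ek_coalgebra k alpha).

End Defs.

From Stdlib Require Import ClassicalEpsilon.
From mathcomp Require Import all_boot.
Set Implicit Arguments. Unset Strict Implicit. Unset Printing Implicit Defensive.

(* An E_k-coalgebra alpha makes a |-> alpha a an embedding of A into the
   prefix order on sequences, a forest whose chains have pairwise distinct
   lengths in [1, k]; since alpha is a homomorphism, Gaifman-adjacent points
   are prefix-comparable, so this is a forest cover of height at most k.
   Conversely, in a forest cover of height h, sending a to the chain of its
   predecessors, listed upwards, is an E_h-coalgebra: the comultiplication
   law says exactly that the prefixes of this chain are the chains of the
   points on it. *)

Definition asbool (P : Prop) : bool :=
  if excluded_middle_informative P then true else false.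

Lemma asboolP (P : Prop) : reflect P (asbool P).
Proof. by rewrite /asbool; case: excluded_middle_informative => p; constructor. Qed.

Lemma min_nat_spec (P : nat -> Prop) n :
  P n -> P (min_nat P) /\ forall m, P m -> min_nat P <= m.
Proof.
move=> Pn; apply: (epsilon_spec (inhabits 0) (fun n => P n /\ forall m, P m -> n <= m)).
have Pex : exists n, asbool (P n) by exists n; apply/asboolP.
case: (ex_minnP Pex) => m /asboolP Pm m_min.
by exists m; split=> // k /asboolP /m_min.
Qed.

Lemma prefix_size_eq (T : eqType) (s t : seq T) :
  prefix s t -> size s = size t -> s = t.
Proof. by rewrite prefixE => /eqP st_s st; rewrite -st_s st take_size. Qed.

Lemma prefix_common_comparable (T : eqType) (s t u : seq T) :
  prefix s u -> prefix t u -> prefix s t || prefix t s.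
Proof.
rewrite !prefixE => /eqP us /eqP ut.
case: (leqP (size s) (size t)) => [st|/ltnW ts].
  by rewrite -ut -take_min (minn_idPl st) us eqxx.
by rewrite -us -take_min (minn_idPl ts) ut eqxx orbT.
Qed.

Section Minimality.
Variables (S : Type) (ar : S -> nat) (A : finType).
Variable RA : forall R : S, (ar R).-tuple A -> Prop.

Lemma forest_height_exists (le : A -> A -> Prop) : exists h, forest_height le h.
Proof.
have chain0 : asbool (is_chain le set0) by apply/asboolP => x y; rewrite inE.
case: (@arg_maxnP _ set0 (fun C => asbool (is_chain le C)) (fun C => #|C|) chain0)
  => C /asboolP chainC maxC.
by exists #|C|; split=> [|D /asboolP /maxC //]; exists C.
Qed.

Lemma rank_forest_cover : forest_cover RA (fun x y => enum_rank x <= enum_rank y).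
Proof.
have total (x y : A) : enum_rank x <= enum_rank y \/ enum_rank y <= enum_rank x.
  exact/orP/leq_total.
split; [split; [|split; [|split]]|].
- by move=> x.
- by move=> x y xy yx; apply/enum_rank_inj/val_inj/anti_leq/andP.
- by move=> x y z; apply: leq_trans.
- by move=> x y z _ _; apply: total.
- by move=> x y _; apply: total.
Qed.

Lemma td_spec :
  (exists le, forest_cover RA le /\ forest_height le (td RA)) /\
  (forall le h, forest_cover RA le -> forest_height le h -> td RA <= h).
Proof.
have [h height] := forest_height_exists (fun x y : A => enum_rank x <= enum_rank y).
have [td_ok td_min] := min_nat_spec
  (P := fun h => exists le, forest_cover RA le /\ forest_height le h)
  (ex_intro _ _ (conj rank_forest_cover height)).
by split=> // le h' cover height'; apply: td_min; exists le.
Qed.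

Lemma kappaE_spec k alpha : 1 <= k -> Ek_coalgebra RA k alpha ->
  (exists beta, Ek_coalgebra RA (kappaE RA) beta) /\ kappaE RA <= k.
Proof.
move=> k_gt0 coalg.
have [[_ kappa_coalg] kappa_min] := min_nat_spec
  (P := fun k => 1 <= k /\ exists alpha, Ek_coalgebra RA k alpha)
  (conj k_gt0 (ex_intro _ _ coalg)).
by split=> //; apply: kappa_min; split=> //; exists alpha.
Qed.

Lemma forest_height_gt0 (le : A -> A -> Prop) h :
  0 < #|A| -> is_forest le -> forest_height le h -> 0 < h.
Proof.
case/card_gt0P=> a _ [le_refl _] [_ height_max].
rewrite -(cards1 a); apply: height_max => x y; rewrite !inE => /eqP-> /eqP->.
by left.
Qed.

End Minimality.

Section CoalgebraForest.
Variables (S : Type) (ar : S -> nat) (A : finType).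
Variable RA : forall R : S, (ar R).-tuple A -> Prop.
Variables (k : nat) (alpha : A -> seq A).
Hypothesis alpha_coalg : Ek_coalgebra RA k alpha.

Definition prefix_order (a b : A) : Prop := prefix (alpha a) (alpha b).

Lemma Ek_coalgebra_inj : injective alpha.
Proof.
case: alpha_coalg => _ [_ [_ alpha_last]] a b ab.
by have := alpha_last a; rewrite ab alpha_last => -[].
Qed.

Lemma prefix_order_forest_cover : forest_cover RA prefix_order.
Proof.
split; [split; [|split; [|split]]|].
- move=> a; exact: prefix_refl.
- move=> a b ab ba; apply/Ek_coalgebra_inj/(prefix_size_eq ab).
  by apply/anti_leq; rewrite !size_prefix.
- move=> a b c; exact: prefix_trans.
- by move=> a b c ba ca; apply/orP/(prefix_common_comparable ba ca).
- move=> a b [_ [R [t [Rt [/tnthP[i ->] /tnthP[j ->]]]]]].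
  case: alpha_coalg => _ [alpha_hom _]; have [comparable _] := alpha_hom R t Rt.
  by have := comparable i j; rewrite !tnth_map => /orP.
Qed.

(* Distinct elements of a prefix chain have images of distinct sizes in [1, k]. *)
Lemma prefix_order_chain_card (C : {set A}) : is_chain prefix_order C -> #|C| <= k.
Proof.
move=> chainC.
have size_inj : {in enum C &, injective (fun a => size (alpha a))}.
  move=> a b; rewrite !mem_enum => aC bC ab; apply: Ek_coalgebra_inj.
  by case: (chainC a b aC bC) => [/prefix_size_eq/(_ ab)|/prefix_size_eq/(_ (esym ab))].
rewrite cardE -(size_map (fun a => size (alpha a))) -(size_iota 1 k).
apply: uniq_leq_size; first by rewrite map_inj_in_uniq ?enum_uniq.
move=> n /mapP[a _ ->]; case: alpha_coalg => alpha_Ek _; have := alpha_Ek a.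
by rewrite /in_Ek mem_iota add1n ltnS.
Qed.

Lemma Ek_coalgebra_forest_cover :
  exists le h, [/\ forest_cover RA le, forest_height le h & h <= k].
Proof.
have [h [[C [chainC <-]] height_max]] := forest_height_exists prefix_order.
exists prefix_order, #|C|; split=> //; first exact: prefix_order_forest_cover.
  by split=> //; exists C.
exact: prefix_order_chain_card.
Qed.

End CoalgebraForest.

Section ForestAncestors.
Variables (A : finType) (le : A -> A -> Prop).
Hypothesis le_forest : is_forest le.

Definition forest_leb : rel A := fun x y => asbool (le x y).

Lemma forest_leb_refl : reflexive forest_leb.
Proof. by case: le_forest => le_refl _ x; apply/asboolP. Qed.

Lemma forest_leb_anti : antisymmetric forest_leb.
Proof.
case: le_forest => _ [le_anti _] x y /andP[/asboolP xy /asboolP yx].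
exact: le_anti.
Qed.

Lemma forest_leb_trans : transitive forest_leb.
Proof.
case: le_forest => _ [_ [le_trans _]] y x z /asboolP xy /asboolP yz.
by apply/asboolP/(le_trans _ _ _ xy yz).
Qed.

Lemma forest_leb_below_total a x y :
  forest_leb x a -> forest_leb y a -> forest_leb x y || forest_leb y x.
Proof.
case: le_forest => _ [_ [_ le_below]] /asboolP xa /asboolP ya.
by apply/orP; case: (le_below a x y xa ya) => /asboolP; [left|right].
Qed.

Definition ancestors (a : A) : seq A := sort forest_leb (enum [pred x | forest_leb x a]).

Lemma mem_ancestors a x : (x \in ancestors a) = forest_leb x a.
Proof. by rewrite mem_sort mem_enum. Qed.

Lemma ancestors_uniq a : uniq (ancestors a).
Proof. by rewrite sort_uniq enum_uniq. Qed.

Lemma ancestors_sorted a : sorted forest_leb (ancestors a).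
Proof.
apply: (@sort_sorted_in _ [pred x | forest_leb x a]).
  by move=> x y xa ya; exact: forest_leb_below_total xa ya.
by apply/allP=> x; rewrite mem_enum.
Qed.

Lemma ancestors_leb_index a x y : x \in ancestors a -> y \in ancestors a ->
  forest_leb x y = (index x (ancestors a) <= index y (ancestors a)).
Proof.
have sorted_a := ancestors_sorted a.
move=> xa ya; apply/idP/idP=> [xy|]; last first.
  exact: (sorted_leq_index forest_leb_trans forest_leb_refl sorted_a).
rewrite leqNgt; apply/negP => lt_yx.
have yx := sorted_ltn_index forest_leb_trans sorted_a y x ya xa lt_yx.
by move: lt_yx; rewrite (@forest_leb_anti x y) ?xy ?yx // ltnn.
Qed.

Lemma take_ancestors a b : b \in ancestors a ->
  take (index b (ancestors a)).+1 (ancestors a) = ancestors b.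
Proof.
move=> ba; apply: (sorted_eq forest_leb_trans forest_leb_anti).
- exact/take_sorted/ancestors_sorted.
- exact: ancestors_sorted.
apply: uniq_perm; [exact/take_uniq/ancestors_uniq | exact: ancestors_uniq | move=> x].
rewrite mem_ancestors; case xa: (x \in ancestors a).
  by rewrite in_take // ltnS -(ancestors_leb_index xa ba).
have -> : (x \in take (index b (ancestors a)).+1 (ancestors a)) = false.
  by apply/contraFF: xa; apply: mem_take.
apply/esym/(contraFF _ xa) => xb; rewrite mem_ancestors.
by apply: forest_leb_trans xb _; rewrite -mem_ancestors.
Qed.

Lemma lastopt_ancestors a : lastopt (ancestors a) = Some a.
Proof.
have aa : a \in ancestors a by rewrite mem_ancestors forest_leb_refl.
rewrite -[in LHS](take_ancestors aa) (take_nth a) ?index_mem // nth_index //.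
by rewrite /lastopt rev_rcons.
Qed.

Lemma prefix_ancestors x y : le x y -> prefix (ancestors x) (ancestors y).
Proof.
move=> le_xy; have xy : x \in ancestors y by rewrite mem_ancestors; apply/asboolP.
by rewrite -(take_ancestors xy) prefix_take.
Qed.

Lemma ancestors_Ek_coalgebra (S : Type) (ar : S -> nat)
    (RA : forall R : S, (ar R).-tuple A -> Prop) h :
  (forall a b, gaifman_adj RA a b -> le a b \/ le b a) -> forest_height le h ->
  Ek_coalgebra RA h ancestors.
Proof.
move=> cover [_ height_max]; split; [|split; [|split]].
- move=> a; apply/andP; split; first by case: (ancestors a) (lastopt_ancestors a).
  rewrite -(card_uniqP (ancestors_uniq a)) -cardsE; apply: height_max => x y.
  rewrite !inE !mem_ancestors => xa ya.
  by case/orP: (forest_leb_below_total xa ya) => /asboolP; [left|right].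
- move=> R t Rt; split; last first.
    by exists t; split=> //; rewrite -map_comp; apply: eq_map => x; exact: lastopt_ancestors.
  move=> i j; rewrite !tnth_map /prefix_comparable.
  case: (eqVneq (tnth t i) (tnth t j)) => [->|ij]; first by rewrite prefix_refl.
  have adj : gaifman_adj RA (tnth t i) (tnth t j).
    by split=> //; exists R, t; rewrite !mem_tnth.
  by case: (cover _ _ adj) => /prefix_ancestors ->; rewrite ?orbT.
- move=> a; rewrite /Ek_delta -[in RHS](mkseq_nth a (ancestors a)) /mkseq -map_comp.
  apply/eq_in_map => i; rewrite mem_iota => /andP[_ lti] /=.
  by rewrite -(take_ancestors (mem_nth a lti)) index_uniq ?ancestors_uniq.
- exact: lastopt_ancestors.
Qed.

End ForestAncestors.

Theorem mainTheorem12 (S : Type) (ar : S -> nat) (A : finType)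
  (RA : forall R : S, (ar R).-tuple A -> Prop) (hA : 0 < #|A|) :
  td RA = kappaE RA.
Proof.
have [[le [cover height]] td_min] := td_spec RA.
have td_gt0 := forest_height_gt0 hA cover.1 height.
have ancestors_coalg := ancestors_Ek_coalgebra cover.1 cover.2 height.
have [[alpha alpha_coalg] kappa_le_td] := kappaE_spec td_gt0 ancestors_coalg.
have [le' [h [cover' height' h_le_kappa]]] := Ek_coalgebra_forest_cover alpha_coalg.
apply/anti_leq/andP; split=> //.
exact: leq_trans (td_min _ _ cover' height') h_le_kappa.
Qed.
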